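(* Let $B_i=(\underline{a}_i,\overline{a}_i)\times(\underline{b}_i,\overline{b}_i)\subset\mathbb{R}^2$, $i=1,\dots,N$, be rectangles, $d$ a positive integer, $p=\binom{d+2}{2}$. Let $$V(B_1,\dots,B_N)=\{f\in\mathbb{Z}[x,y]\mid \{(x,y):f(x,y)=0\}\cap B_i\neq\emptyset \text{ for all } i\}.$$ Let $\Delta_d:\mathbb{R}^{2p}\to\mathbb{R}$ be $\Delta_d(x_1,y_1,\dots,x_p,y_p)=\det M_d(x_1,y_1,\dots,x_p,y_p)$, where $M_d$ is the $p\times p$ matrix whose $i$-th column is $\mathbf{v}_d(x_i,y_i)$ and $\mathbf{v}_d$ is the vector of all $p$ monomials in $x,y$ of total degree at most $d$. If for at least one choice of indices $1\le j_1<j_2<\cdots<j_p\le N$ the function $\Delta_d$ is strictly positive at every point of $B_{j_1}\times\cdots\times B_{j_p}\subset\mathbb{R}^{2p}$, or strictly negative at every point of it, then $$\min\{\deg f\mid f\in V(B_1,\dots,B_N),\ f\neq0\}\ge d+1.$$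
   Context: $\mathbf{v}_d=[1,x,y,x^2,xy,y^2,\dots,x^d,\dots,y^d]^T$ and $\mathbf{v}_d(x_i,y_i)$ is its evaluation at $(x_i,y_i)$. *)

From HB Require Import structures.
From mathcomp Require Import all_boot all_order all_algebra.
From mathcomp Require Import reals.
From mathcomp Require Import mpoly.
Set Implicit Arguments. Unset Strict Implicit. Unset Printing Implicit Defensive.
Import Order.TTheory GRing.Theory Num.Theory.
Local Open Scope ring_scope.

(* Exponent pairs (i, j) of the monomials x^i y^j of total degree <= d, in the
   order 1, x, y, x^2, xy, y^2, ..., x^d, ..., y^d. There are 'C(d+2,2) of them. *)
Definition monos (d : nat) : seq (nat * nat) :=
  flatten [seq [seq (k - j, j)%N | j <- iota 0 k.+1] | k <- iota 0 d.+1].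

Definition nmon (d : nat) : nat := 'C(d.+2, 2).

Definition Mvander (R : comRingType) (d : nat) (pt : 'I_(nmon d) -> R * R)
  : 'M[R]_(nmon d) :=
  \matrix_(i < nmon d, j < nmon d)
     ((pt j).1 ^+ (nth (0, 0)%N (monos d) i).1 *
      (pt j).2 ^+ (nth (0, 0)%N (monos d) i).2).

Definition Delta (R : comRingType) (d : nat) (pt : 'I_(nmon d) -> R * R) : R :=
  \det (Mvander pt).

Definition evalZ (R : realType) (f : {mpoly int[2]}) (x y : R) : R :=
  (map_mpoly (fun z : int => z%:~R) f).@[[ffun i : 'I_2 => if i == ord0 then x else y]].

Definition tdeg (f : {mpoly int[2]}) : nat := (msize f).-1.

Definition in_box (R : realType) (alo ahi blo bhi : R) (x y : R) : Prop :=
  alo < x < ahi /\ blo < y < bhi.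

Definition Vset (R : realType) (N : nat) (alo ahi blo bhi : 'I_N -> R)
  (f : {mpoly int[2]}) : Prop :=
  forall i : 'I_N, exists x y : R,
    in_box (alo i) (ahi i) (blo i) (bhi i) x y /\ evalZ f x y = 0.

From HB Require Import structures.
From mathcomp Require Import all_boot all_order all_algebra.
From mathcomp Require Import reals.
From mathcomp Require Import mpoly.
Set Implicit Arguments. Unset Strict Implicit. Unset Printing Implicit Defensive.
Import Order.TTheory GRing.Theory Num.Theory.
Local Open Scope ring_scope.

(* If f has total degree at most d, then the row of its coefficients, indexed
   by the monomials of degree <= d, multiplied by M_d(P_1, ..., P_p) is the row
   (f(P_1), ..., f(P_p)). So if f != 0 vanishes at one point P_k of each box
   B_(j_k), this nonzero row lies in the left kernel of M_d and Delta_d vanishes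
   at a point of B_(j_1) x ... x B_(j_p), against its constant sign there. *)

Section Monomials.

Definition diag_monos (k : nat) : seq (nat * nat) :=
  [seq (k - j, j)%N | j <- iota 0 k.+1].

Lemma monosS d : monos d.+1 = monos d ++ diag_monos d.+1.
Proof. by rewrite /monos -addn1 iotaD map_cat flatten_cat /= cats0. Qed.

Lemma mem_diag_monos k a b : ((a, b) \in diag_monos k) = (a + b == k)%N.
Proof.
apply/mapP/eqP => [[j] | <-].
  by rewrite mem_iota add0n ltnS => /andP[_ le_jk] [-> ->]; rewrite subnK.
by exists b; rewrite ?mem_iota ?ltnS ?leq_addl ?addnK.
Qed.

Lemma mem_monos d a b : ((a, b) \in monos d) = (a + b <= d)%N.
Proof.
elim: d => [|d IHd]; first by case: a; case: b.
by rewrite monosS mem_cat IHd mem_diag_monos [in RHS]leq_eqVlt ltnS orbC.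
Qed.

Lemma uniq_monos d : uniq (monos d).
Proof.
elim: d => [//|d IHd]; rewrite monosS cat_uniq IHd andTb.
rewrite map_inj_in_uniq ?iota_uniq ?andbT; last by move=> i j _ _ [].
apply/hasPn => -[a b]; rewrite mem_diag_monos mem_monos => /eqP ->.
by rewrite ltnn.
Qed.

Lemma size_monos d : size (monos d) = nmon d.
Proof.
rewrite /nmon; elim: d => [//|d IHd].
by rewrite monosS size_cat IHd size_map size_iota [in RHS]binS bin1.
Qed.

Lemma big_ord2 (T : Type) (idx : T) (op : Monoid.law idx) (F : 'I_2 -> T) :
  \big[op/idx]_(i < 2) F i = op (F ord0) (F ord_max).
Proof.
by rewrite !big_ord_recl big_ord0 Monoid.mulm1; congr (op _ (F _)); apply: val_inj.
Qed.

Definition mnm2 (e : nat * nat) : 'X_{1..2} := [multinom [tuple e.1; e.2]].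

Lemma mnm2K (m : 'X_{1..2}) : mnm2 (m ord0, m ord_max) = m.
Proof.
apply/mnmP => -[[|[|i]] lt_i2] //=; congr (m _); exact: val_inj.
Qed.

Lemma mnm2_inj : injective mnm2.
Proof.
move=> e e' eq_ee'.
by rewrite [e]surjective_pairing [e']surjective_pairing
  -[e.1]/(mnm2 e ord0) -[e.2]/(mnm2 e ord_max) eq_ee'.
Qed.

End Monomials.

Section CoefficientRow.

Variables (R : comNzRingType) (d : nat).

Definition point2 (x y : R) : {ffun 'I_2 -> R} :=
  [ffun i => if i == ord0 then x else y].

Lemma meval_point2 (g : {mpoly R[2]}) x y :
  g.@[point2 x y] = \sum_(m <- msupp g) g@_m * (x ^+ m ord0 * y ^+ m ord_max).
Proof. by rewrite mevalE; apply: eq_bigr => m _; rewrite big_ord2 !ffunE. Qed.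

Lemma msupp_mdeg_le (g : {mpoly R[2]}) m :
  (msize g <= d.+1)%N -> m \in msupp g -> (m ord0 + m ord_max <= d)%N.
Proof.
move=> le_gd /msize_mdeg_lt lt_mg; rewrite -ltnS (leq_trans _ le_gd) //.
by rewrite mdegE big_ord2 in lt_mg.
Qed.

Definition coefrow (g : {mpoly R[2]}) : 'rV[R]_(nmon d) :=
  \row_i g@_(mnm2 (nth (0, 0)%N (monos d) i)).

Lemma coefrow_eq0 (g : {mpoly R[2]}) :
  (msize g <= d.+1)%N -> (coefrow g == 0) = (g == 0).
Proof.
move=> le_gd; apply/eqP/eqP => [/rowP g0 | ->]; last first.
  by apply/rowP => i; rewrite !mxE mcoeff0.
apply/mpolyP => m; rewrite mcoeff0; apply/eqP; rewrite mcoeff_eq0.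
apply/negP => mg; have deg_m := msupp_mdeg_le le_gd mg.
have lt_i : (index (m ord0, m ord_max) (monos d) < nmon d)%N.
  by rewrite -size_monos index_mem mem_monos.
move: (g0 (Ordinal lt_i)); rewrite !mxE nth_index ?mem_monos // mnm2K.
by move/eqP; rewrite mcoeff_eq0 mg.
Qed.

Lemma meval_point2_monos (g : {mpoly R[2]}) x y : (msize g <= d.+1)%N ->
  g.@[point2 x y] = \sum_(i < nmon d) coefrow g 0 i *
    (x ^+ (nth (0, 0)%N (monos d) i).1 * y ^+ (nth (0, 0)%N (monos d) i).2).
Proof.
move=> le_gd; pose G m := g@_m * (x ^+ m ord0 * y ^+ m ord_max).
transitivity (\sum_(m <- map mnm2 (monos d)) G m); last first.
  rewrite big_map (big_nth (0, 0)%N) size_monos big_mkord.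
  by apply: eq_bigr => i _; rewrite mxE.
rewrite meval_point2; apply: perm_big_supp; apply: uniq_perm.
- by rewrite filter_uniq ?msupp_uniq.
- by rewrite filter_uniq // (map_inj_uniq mnm2_inj) uniq_monos.
move=> m; rewrite !mem_filter; apply: andb_id2l => nz_Gm.
have mg : m \in msupp g.
  by rewrite mcoeff_msupp; apply: contraNneq nz_Gm => ->; rewrite mul0r.
by rewrite mg -(mnm2K m) map_f // mem_monos (msupp_mdeg_le le_gd).
Qed.

Lemma coefrow_mulmx_Mvander (g : {mpoly R[2]}) (pt : 'I_(nmon d) -> R * R) :
  (msize g <= d.+1)%N ->
  coefrow g *m Mvander pt = \row_k g.@[point2 (pt k).1 (pt k).2].
Proof.
move=> le_gd; apply/rowP => k; rewrite !mxE (meval_point2_monos _ _ le_gd).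
by apply: eq_bigr => i _; rewrite /Mvander mxE.
Qed.

End CoefficientRow.

Lemma Delta_eq0_of_common_root (F : fieldType) (d : nat) (g : {mpoly F[2]})
    (pt : 'I_(nmon d) -> F * F) :
  g != 0 -> (msize g <= d.+1)%N ->
  (forall k, g.@[point2 (pt k).1 (pt k).2] = 0) -> Delta pt = 0.
Proof.
move=> nz_g le_gd g_pt0; apply/eqP/det0P; exists (coefrow d g).
  by rewrite coefrow_eq0.
by rewrite coefrow_mulmx_Mvander //; apply/rowP => k; rewrite !mxE g_pt0.
Qed.

Lemma msize_map_mpoly (R S : nzRingType) (n : nat) (f : {rmorphism R -> S})
    (p : {mpoly R[n]}) :
  injective f -> msize (map_mpoly f p) = msize p.
Proof. by move=> inj_f; rewrite !msizeE (perm_big _ (msupp_map_mpoly _ inj_f)). Qed.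

Theorem corollary4 (R : realType) (N : nat) (alo ahi blo bhi : 'I_N -> R)
  (d : nat) (hd : (0 < d)%N) :
  (exists j : 'I_(nmon d) -> 'I_N,
     (forall k l : 'I_(nmon d), (k < l)%N -> (j k < j l)%N) /\
     ((forall pt : 'I_(nmon d) -> R * R,
         (forall k, in_box (alo (j k)) (ahi (j k)) (blo (j k)) (bhi (j k))
                           (pt k).1 (pt k).2) ->
         0 < Delta pt) \/
      (forall pt : 'I_(nmon d) -> R * R,
         (forall k, in_box (alo (j k)) (ahi (j k)) (blo (j k)) (bhi (j k))
                           (pt k).1 (pt k).2) ->
         Delta pt < 0))) ->
  forall f : {mpoly int[2]}, Vset alo ahi blo bhi f -> f != 0 ->
    (d.+1 <= tdeg f)%N.
Proof.
move=> [j [_ Delta_sign]] f Vf nz_f; rewrite ltnNge; apply/negP => le_fd.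
pose g := map_mpoly (fun z : int => z%:~R : R) f.
have msize_g : msize g = msize f by apply: msize_map_mpoly; exact: intr_inj.
have /fin_all_exists [pt pt_root] : forall k, exists xy : R * R,
    in_box (alo (j k)) (ahi (j k)) (blo (j k)) (bhi (j k)) xy.1 xy.2
    /\ g.@[point2 xy.1 xy.2] = 0.
  by move=> k; have [x [y xy_root]] := Vf (j k); exists (x, y).
have le_gd : (msize g <= d.+1)%N.
  by rewrite msize_g; move: le_fd; rewrite /tdeg; case: (msize f).
have nz_g : g != 0 by rewrite -msize_poly_eq0 msize_g msize_poly_eq0.
have Delta0 := Delta_eq0_of_common_root nz_g le_gd (fun k => (pt_root k).2).
have pt_in k := (pt_root k).1.
by case: Delta_sign => /(_ pt pt_in); rewrite Delta0 ltxx.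
Qed.
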